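(* Let $G=(V,E)$ be a hypergraph and let $k$ and $m$ be integers such that the vertices of $G$ can be $k$-colored so that every hyperedge containing at least $m$ vertices contains a vertex of each of the $k$ colors. Then for every integer $t'>1$, with $k'=\binom{k}{t'}+\sum_{i=0}^{t'-2}\binom{k-1}{i}$ and $m'=\max\{m,k(t'-1)+1\}$, there exists a $k'$-coloring of the $t'$-tuples of vertices of $G$ such that every hyperedge containing at least $m'$ vertices contains a $t'$-tuple of each of the $k'$ colors.
   Context: A $t'$-tuple of vertices is a $t'$-element subset of $V$; a hyperedge contains it if it is a subset of the hyperedge. Binomial coefficients $\binom{a}{b}$ with $b>a$ are $0$. *)

From mathcomp Require Import all_boot.
Set Implicit Arguments. Unset Strict Implicit. Unset Printing Implicit Defensive.

Definition polychromatic_vertex_coloring (V : finType) (E : {set {set V}})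
    (k m : nat) (c : V -> 'I_k) : Prop :=
  forall e, e \in E -> m <= #|e| -> forall i : 'I_k, exists2 v, v \in e & c v = i.

(* d colors subsets of V (only its values on t-element subsets matter);
   every hyperedge with at least m vertices contains a t-tuple (t-element
   subset of V contained in the hyperedge) of each of the k colors. *)
Definition polychromatic_tuple_coloring (V : finType) (E : {set {set V}})
    (t k m : nat) (d : {set V} -> 'I_k) : Prop :=
  forall e, e \in E -> m <= #|e| -> forall j : 'I_k,
    exists T : {set V}, [/\ #|T| = t, T \subset e & d T = j].

Definition kprime (k t : nat) : nat :=
  'C(k, t) + \sum_(0 <= i < t.-1) 'C(k.-1, i).

Definition mprime (k m t : nat) : nat := maxn m (k * (t - 1)).+1.

From mathcomp Require Import all_boot.
From mathcomp Require Import zify.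

Set Implicit Arguments.
Unset Strict Implicit.
Unset Printing Implicit Defensive.

(* A t-tuple T on which
   c is injective is coded by its set of colors, a t-subset of the k colors.
   Otherwise pick a color a repeated in T and code T by the set of its other
   colors, a subset of the k - 1 colors different from a; the codes of the
   second kind that matter have size at most t - 2, so there are k' relevant
   codes in all, and the tuple coloring numbers them.  A hyperedge with at
   least m vertices sees every color, so it contains a tuple with each code of
   the first kind; with more than k(t - 1) vertices it also has a color a
   occurring t times, and any set X of at most t - 2 colors other than a is
   the code of a tuple made of one vertex of each color of X and t - |X| >= 2
   vertices of color a. *)

Lemma exists_subset_card (T : finType) (A : {set T}) n :
  n <= #|A| -> exists2 B : {set T}, B \subset A & #|B| = n.
Proof.
rewrite -bin_gt0 -cards_draws => /card_gt0P[B].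
by rewrite inE => /andP[B_sub /eqP B_card]; exists B.
Qed.

Lemma exists_large_fiber (T : finType) n (f : T -> 'I_n) (A : {set T}) p :
  n * p < #|A| -> exists i, p < #|[set x in A | f x == i]|.
Proof.
move=> A_big; apply/existsP; apply: contraTT A_big => /existsPn small.
rewrite -leqNgt -sum1_card (partition_big f predT) //=.
apply: (@leq_trans (\sum_(i < n) p)); last by rewrite sum_nat_const card_ord.
by apply: leq_sum => i _; rewrite sum1dep_card leqNgt small.
Qed.

Lemma card_small_sets (T : finType) n :
  #|[set X : {set T} | #|X| < n]| = \sum_(0 <= i < n) 'C(#|T|, i).
Proof.
elim: n => [|n IHn].
  rewrite big_geq //; apply/eqP; rewrite cards_eq0.
  by apply/eqP/setP => X; rewrite !inE.
have -> : [set X : {set T} | #|X| < n.+1] =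
          [set X : {set T} | #|X| < n] :|: [set X : {set T} | #|X| == n].
  by apply/setP => X; rewrite !inE ltnS leq_eqVlt orbC.
rewrite cardsU big_nat_recr //= -IHn -card_draws.
suff -> : [set X : {set T} | #|X| < n] :&: [set X : {set T} | #|X| == n] = set0.
  by rewrite cards0 subn0.
by apply/setP => X; rewrite !inE; case: eqP => [->|]; rewrite ?ltnn ?andbF.
Qed.

Lemma exists_onto_ord (U : finType) (A : {set U}) n :
  #|A| = n -> 0 < n ->
  exists g : U -> 'I_n, forall j, exists2 u, u \in A & g u = j.
Proof.
case: n => // n A_card _; exists (fun u => inord (index u (enum A))) => j.
have j_lt : j < size (enum A) by rewrite -cardE A_card.
have [u0 _] : exists u0, u0 \in A by apply/card_gt0P; rewrite A_card.
exists (nth u0 (enum A) j); first by rewrite -mem_enum mem_nth.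
by apply: val_inj; rewrite /= index_uniq ?enum_uniq // inordK.
Qed.

Section TupleCode.

Variables (V : finType) (k : nat) (c : V -> 'I_k.+1).

Definition repeated_color (T : {set V}) : option 'I_k.+1 :=
  [pick i | 1 < #|[set v in T | c v == i]|].

Definition tuple_code (T : {set V}) : {set 'I_k.+1} + {set 'I_k} :=
  if repeated_color T is Some a then inr [set x | lift a x \in c @: T]
  else inl (c @: T).

Lemma repeated_color_injective (T : {set V}) :
  {in T &, injective c} -> repeated_color T = None.
Proof.
move=> c_inj; rewrite /repeated_color; case: pickP => // a.
rewrite ltnNge => /negP[]; apply/card_le1_eqP => v w; rewrite !inE.
by move=> /andP[vT /eqP cv] /andP[wT /eqP cw]; apply: c_inj; rewrite // cv cw.
Qed.

Lemma repeated_color_unique (T : {set V}) a :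
  (forall i, i != a -> #|[set v in T | c v == i]| <= 1) ->
  1 < #|[set v in T | c v == a]| -> repeated_color T = Some a.
Proof.
move=> other_small a_rep; rewrite /repeated_color.
case: pickP => [i i_rep | /(_ a)]; last by rewrite a_rep.
by case: (eqVneq i a) => [-> // | /other_small]; rewrite leqNgt i_rep.
Qed.

Variables (e : {set V}) (rep : 'I_k.+1 -> V).
Hypotheses (rep_in : forall i, rep i \in e) (repK : cancel rep c).

Lemma rainbow_code_realized (S : {set 'I_k.+1}) :
  exists T : {set V}, [/\ #|T| = #|S|, T \subset e & tuple_code T = inl S].
Proof.
exists (rep @: S); split; first by rewrite card_imset //; apply: can_inj repK.
  by apply/subsetP => _ /imsetP[i _ ->].
have c_inj : {in rep @: S &, injective c}.
  by move=> _ _ /imsetP[i _ ->] /imsetP[j _ ->]; rewrite !repK => ->.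
rewrite /tuple_code repeated_color_injective //.
by rewrite -imset_comp (eq_imset _ repK) imset_id.
Qed.

Lemma repeated_code_realized a (W : {set V}) (X : {set 'I_k}) :
  W \subset [set v in e | c v == a] -> 1 < #|W| ->
  exists T : {set V}, [/\ #|T| = #|X| + #|W|, T \subset e & tuple_code T = inr X].
Proof.
move=> W_sub W_big; set Y := rep @: (lift a @: X).
have W_col v : v \in W -> v \in e /\ c v = a.
  by move/(subsetP W_sub); rewrite inE => /andP[? /eqP].
have Y_rep v : v \in Y -> exists2 x, x \in X & v = rep (lift a x).
  by case/imsetP => _ /imsetP[x xX ->] ->; exists x.
have Y_col v : v \in Y -> c v != a.
  by case/Y_rep => x _ ->; rewrite repK eq_sym neq_lift.
have YW0 : Y :&: W = set0.
  apply/setP => v; rewrite !inE; apply/negbTE/andP => -[/Y_col].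
  by move=> ca /W_col[_ /eqP]; rewrite (negbTE ca).
have other_small i : i != a -> #|[set v in Y :|: W | c v == i]| <= 1.
  move=> ia; rewrite -(cards1 (rep i)); apply/subset_leq_card/subsetP => v.
  rewrite !inE => /andP[/orP[/Y_rep[x _ ->] | /W_col[_ cv]] /eqP ci].
    by rewrite -ci repK.
  by move: ia; rewrite -ci cv eqxx.
have a_rep : 1 < #|[set v in Y :|: W | c v == a]|.
  apply: leq_trans W_big _; apply/subset_leq_card/subsetP => w wW.
  by rewrite !inE wW orbT (W_col w wW).2 eqxx.
exists (Y :|: W); split.
- rewrite cardsU YW0 cards0 subn0 card_imset; last exact: can_inj repK.
  by rewrite card_imset //; apply: lift_inj.
- rewrite subUset; apply/andP; split; apply/subsetP => v.
    by case/Y_rep => x _ ->.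
  by case/W_col.
rewrite /tuple_code (repeated_color_unique other_small a_rep); congr inr.
apply/setP => x; rewrite inE; apply/imsetP/idP => [[v] | xX].
  rewrite inE => /orP[/Y_rep[y yX ->] | /W_col[_ ->]]; last first.
    by move/eqP; rewrite eq_sym (negbTE (neq_lift _ _)).
  by rewrite repK => /lift_inj ->.
by exists (rep (lift a x)); rewrite ?repK // inE !imset_f.
Qed.

End TupleCode.

Definition admissible_codes k t : {set {set 'I_k.+1} + {set 'I_k}} :=
  inl @: [set S : {set _} | #|S| == t]
  :|: inr @: [set X : {set _} | #|X| < t.-1].

Lemma card_admissible_codes k t : #|admissible_codes k t| = kprime k.+1 t.
Proof.
rewrite cardsU !card_imset; try by move=> ? ? [].
rewrite card_draws card_small_sets !card_ord.
suff -> : inl @: [set S : {set 'I_k.+1} | #|S| == t]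
          :&: inr @: [set X : {set 'I_k} | #|X| < t.-1] = set0.
  by rewrite cards0 subn0.
apply/setP => u; rewrite !inE; apply/negbTE/andP.
by case=> /imsetP[? _ ->] /imsetP[].
Qed.

Lemma admissible_code_realized (V : finType) k (c : V -> 'I_k.+1)
    (e : {set V}) t u :
  (forall i, exists2 v, v \in e & c v = i) -> k.+1 * (t - 1) < #|e| ->
  u \in admissible_codes k t ->
  exists T : {set V}, [/\ #|T| = t, T \subset e & tuple_code c T = u].
Proof.
move=> /fin_all_exists2[rep rep_in repK] e_big.
case/setUP => /imsetP[S]; rewrite inE => S_card ->.
  have [T [T_card T_sub T_code]] := rainbow_code_realized rep_in repK S.
  by exists T; rewrite T_card (eqP S_card).
have [a a_big] := exists_large_fiber c e_big.
have /exists_subset_card[W W_sub W_card] :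
  t - #|S| <= #|[set v in e | c v == a]| by lia.
have [|T [T_card T_sub T_code]] := repeated_code_realized rep_in repK S W_sub.
  by rewrite W_card; move: S_card; lia.
by exists T; split => //; rewrite T_card W_card; move: S_card; lia.
Qed.

Lemma kprime_gt0 k t : 1 < t -> 0 < kprime k t.
Proof. by case: t => [|[|t]] // _; rewrite /kprime big_nat_recl // bin0 addnS. Qed.

Theorem proposition4 (V : finType) (E : {set {set V}}) (k m : nat) :
  (exists c : V -> 'I_k, polychromatic_vertex_coloring E m c) ->
  forall t : nat, 1 < t ->
    exists d : {set V} -> 'I_(kprime k t),
      polychromatic_tuple_coloring E t (mprime k m t) d.
Proof.
move=> [c c_poly] t t_gt1.
case: k c c_poly => [|k] c c_poly.
  exists (fun=> Ordinal (kprime_gt0 0 t_gt1)) => e _ e_big.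
  have /card_gt0P[v _] : 0 < #|e| := leq_trans (leq_maxr _ _) e_big.
  by case: (c v).
have [g g_onto] :=
  exists_onto_ord (card_admissible_codes k t) (kprime_gt0 _ t_gt1).
exists (g \o tuple_code c) => e eE.
rewrite /mprime geq_max => /andP[m_le e_big] j.
have [u u_adm <-] := g_onto j.
have [T [T_card T_sub <-]] :=
  admissible_code_realized (c_poly e eE m_le) e_big u_adm.
by exists T.
Qed.
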